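(* Let $d:\mathbb{Z}\to\mathbb{C}$ be bounded and $(Ju)(n)=u(n-1)+d(n)u(n)+u(n+1)$ on $\ell^2(\mathbb{Z})$. Suppose that $\Im(d(n))\to0$ as $n\to+\infty$ (or as $n\to-\infty$) and that there exists $m\in\mathbb{Z}$ with $\Im(d(m))\ne0$ and $\Im(d(m+1))\ne0$. Then $J$ has no boundary eigenvalues.
   Context: The numerical range is $\operatorname{Num}(J)=\{\langle Ju,u\rangle:\|u\|=1\}$, and a boundary eigenvalue of $J$ is an eigenvalue of $J$ lying in the topological boundary of $\operatorname{Num}(J)$. *)

From Stdlib Require Import Reals ZArith.
Open Scope R_scope.

Definition Cplx : Type := (R * R)%type.
Definition Re (z : Cplx) : R := fst z.
Definition Im (z : Cplx) : R := snd z.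
Definition C0 : Cplx := (0, 0).
Definition Cadd (z w : Cplx) : Cplx := (Re z + Re w, Im z + Im w).
Definition Csub (z w : Cplx) : Cplx := (Re z - Re w, Im z - Im w).
Definition Cmul (z w : Cplx) : Cplx :=
  (Re z * Re w - Im z * Im w, Re z * Im w + Im z * Re w).
Definition Cconj (z : Cplx) : Cplx := (Re z, - Im z).
Definition Cnorm2 (z : Cplx) : R := Re z ^ 2 + Im z ^ 2.
Definition Cmod (z : Cplx) : R := sqrt (Cnorm2 z).

(* Series indexed by Z: sum_{n in Z} f n = l, with the terms enumerated as
   f 0 + f (-1) + f 1 + f (-2) + ... (pairs f k + f (-k-1), k = 0,1,...). *)
Definition Zseries (f : Z -> R) (l : R) : Prop :=
  infinite_sum (fun k : nat => f (Z.of_nat k) + f (- Z.of_nat k - 1)%Z) l.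
Definition ZseriesC (f : Z -> Cplx) (z : Cplx) : Prop :=
  Zseries (fun n => Re (f n)) (Re z) /\ Zseries (fun n => Im (f n)) (Im z).

Definition in_l2 (u : Z -> Cplx) : Prop := exists l, Zseries (fun n => Cnorm2 (u n)) l.
Definition l2_norm2_is (u : Z -> Cplx) (s : R) : Prop := Zseries (fun n => Cnorm2 (u n)) s.
Definition inner_is (v u : Z -> Cplx) (z : Cplx) : Prop :=
  ZseriesC (fun n => Cmul (v n) (Cconj (u n))) z.

Definition Jop (d : Z -> Cplx) (u : Z -> Cplx) : Z -> Cplx :=
  fun n => Cadd (Cadd (u (n - 1)%Z) (Cmul (d n) (u n))) (u (n + 1)%Z).

Definition NumRange (d : Z -> Cplx) (z : Cplx) : Prop :=
  exists u : Z -> Cplx, l2_norm2_is u 1 /\ inner_is (Jop d u) u z.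

Definition is_eigenvalue (d : Z -> Cplx) (lam : Cplx) : Prop :=
  exists u : Z -> Cplx, in_l2 u /\ (exists n, u n <> C0) /\
    forall n, Jop d u n = Cmul lam (u n).

Definition in_closure (S : Cplx -> Prop) (z : Cplx) : Prop :=
  forall eps, 0 < eps -> exists w, S w /\ Cmod (Csub w z) < eps.
Definition in_interior (S : Cplx -> Prop) (z : Cplx) : Prop :=
  exists eps, 0 < eps /\ forall w, Cmod (Csub w z) < eps -> S w.
Definition in_boundary (S : Cplx -> Prop) (z : Cplx) : Prop :=
  in_closure S z /\ ~ in_interior S z.

Definition is_boundary_eigenvalue (d : Z -> Cplx) (lam : Cplx) : Prop :=
  is_eigenvalue d lam /\ in_boundary (NumRange d) lam.

(* Let lam be an eigenvalue with normalized eigenvector u.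
   1. The three-term recurrence shows that u cannot vanish at two consecutive
      sites, nor on a half-line.  Hence, under the hypotheses on d, there is a
      site j with u(j) <> 0 and Im d(j) <> Im lam (the site is "detuned").
   2. For v in C, the test vector x = (1 - v conj(u j)) u + v e_j satisfies
         ||x||^2 = N := 1 + (1 - |u j|^2) |v|^2,
         <Jx, x> = N lam + v b + |v|^2 e,
      with b = 2 i (Im d(j) - Im lam) conj(u j) <> 0 and e an explicit constant.
      So Num(J) contains lam + (v b + |v|^2 e) / N for every v.
   3. Solving a quadratic equation for |v|^2 shows that v |-> (v b + |v|^2 e)/N
      covers a whole disc around 0 when b <> 0.  Hence lam is an interior point
      of Num(J), not a boundary point.
   The boundedness of d only makes J a bounded operator; the argument does not
   use it. *)

From Stdlib Require Import Reals ZArith Lra Lia Psatz Classical.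
From Coquelicot Require Import Series.
Open Scope R_scope.

Definition Cscal (s : R) (z : Cplx) : Cplx := (s * Re z, s * Im z).

Lemma Cplx_eq (z w : Cplx) : Re z = Re w -> Im z = Im w -> z = w.
Proof. destruct z, w; unfold Re, Im; simpl; intros -> ->; reflexivity. Qed.

Ltac cplx_unfold := unfold Jop, Cadd, Csub, Cmul, Cconj, Cscal, Cnorm2, C0, Re, Im; simpl.
Ltac cplx_ring := apply Cplx_eq; cplx_unfold; ring.

Lemma Cnorm2_nonneg (z : Cplx) : 0 <= Cnorm2 z.
Proof. unfold Cnorm2. nra. Qed.

Lemma Cnorm2_pos (z : Cplx) : z <> C0 -> 0 < Cnorm2 z.
Proof.
  intros Hz. destruct z as [a b]. unfold Cnorm2, Re, Im; simpl.
  destruct (Req_dec a 0) as [->|Ha].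
  - destruct (Req_dec b 0) as [->|Hb]; [contradiction|].
    pose proof (Rsqr_pos_lt b Hb). unfold Rsqr in *. nra.
  - pose proof (Rsqr_pos_lt a Ha). unfold Rsqr in *. nra.
Qed.

Lemma Cnorm2_scal (s : R) (z : Cplx) : Cnorm2 (Cscal s z) = s * s * Cnorm2 z.
Proof. cplx_unfold. ring. Qed.

Lemma Cnorm2_mul (z w : Cplx) : Cnorm2 (Cmul z w) = Cnorm2 z * Cnorm2 w.
Proof. cplx_unfold. ring. Qed.

Lemma Cnorm2_lt_of_Cmod_lt (z : Cplx) (delta : R) :
  Cmod z < sqrt delta -> Cnorm2 z < delta.
Proof. apply sqrt_lt_0_alt. Qed.

Definition zpair (f : Z -> R) (k : nat) : R := f (Z.of_nat k) + f (- Z.of_nat k - 1)%Z.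

Definition zslot (i : Z) : nat :=
  if Z_le_dec 0 i then Z.to_nat i else Z.to_nat (- i - 1).

Lemma zslot_hit (i : Z) : Z.of_nat (zslot i) = i \/ (- Z.of_nat (zslot i) - 1)%Z = i.
Proof. unfold zslot. destruct (Z_le_dec 0 i); [left|right]; lia. Qed.

Lemma zslot_miss (i : Z) (k : nat) :
  k <> zslot i -> Z.of_nat k <> i /\ (- Z.of_nat k - 1)%Z <> i.
Proof. unfold zslot. destruct (Z_le_dec 0 i); lia. Qed.

Lemma Zseries_plus (f g : Z -> R) (l1 l2 : R) : Zseries f l1 -> Zseries g l2 ->
  Zseries (fun n => f n + g n) (l1 + l2).
Proof.
  intros H1 H2. apply is_series_Reals in H1, H2. apply is_series_Reals.
  eapply is_series_ext; [|exact (is_series_plus _ _ _ _ H1 H2)].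
  intros k. cbn. ring.
Qed.

Lemma Zseries_scal (a : R) (f : Z -> R) (l : R) : Zseries f l ->
  Zseries (fun n => a * f n) (a * l).
Proof.
  intros H. apply is_series_Reals in H. apply is_series_Reals.
  replace (a * l) with (l * a) by ring.
  eapply is_series_ext; [|exact (is_series_scal_r a _ _ H)].
  intros k. cbn. ring.
Qed.

Lemma Zseries_ext (f g : Z -> R) (l : R) : (forall n, f n = g n) ->
  Zseries f l -> Zseries g l.
Proof.
  intros E H. apply is_series_Reals in H. apply is_series_Reals.
  eapply is_series_ext; [|exact H]. intros k. cbn. rewrite !E. reflexivity.
Qed.

Lemma infinite_sum_single (s : nat -> R) (k0 : nat) :
  (forall k, k <> k0 -> s k = 0) -> infinite_sum s (s k0).
Proof.
  intros Hs.
  assert (Hpartial : forall n, sum_f_R0 s n = if (k0 <=? n)%nat then s k0 else 0).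
  { induction n as [|n IH]; simpl sum_f_R0.
    - destruct (Nat.leb_spec k0 0).
      + replace k0 with 0%nat by lia. reflexivity.
      + apply Hs. lia.
    - rewrite IH. destruct (Nat.leb_spec k0 n), (Nat.leb_spec k0 (S n)); try lia.
      + rewrite (Hs (S n)) by lia. ring.
      + replace k0 with (S n) by lia. ring.
      + rewrite (Hs (S n)) by lia. ring. }
  intros eps Heps. exists k0. intros n Hn. rewrite Hpartial.
  destruct (Nat.leb_spec k0 n); [|lia]. rewrite Rdist_eq. exact Heps.
Qed.

Definition zdelta (i : Z) (c : R) (n : Z) : R := if Z.eq_dec n i then c else 0.

Lemma Zseries_delta (i : Z) (c : R) : Zseries (zdelta i c) c.
Proof.
  unfold Zseries. fold (zpair (zdelta i c)).
  replace c with (zpair (zdelta i c) (zslot i)) at 2.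
  - apply infinite_sum_single. intros k Hk.
    destruct (zslot_miss i k Hk) as [H1 H2]. unfold zpair, zdelta.
    destruct (Z.eq_dec (Z.of_nat k) i); [contradiction|].
    destruct (Z.eq_dec (- Z.of_nat k - 1) i); [contradiction|]. ring.
  - unfold zpair, zdelta. destruct (zslot_hit i) as [H|H];
      destruct (Z.eq_dec (Z.of_nat (zslot i)) i);
      destruct (Z.eq_dec (- Z.of_nat (zslot i) - 1) i); lia || ring.
Qed.

Lemma Zseries_term_le (f : Z -> R) (l : R) (i : Z) :
  Zseries f l -> (forall n, 0 <= f n) -> f i <= l.
Proof.
  intros Hl Hf.
  assert (Hterm : f i <= zpair f (zslot i)).
  { unfold zpair. pose proof (Hf (Z.of_nat (zslot i))).
    pose proof (Hf (- Z.of_nat (zslot i) - 1)%Z).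
    destruct (zslot_hit i) as [E|E]; rewrite E in *; lra. }
  assert (Hpair : forall k, 0 <= zpair f k).
  { intros k. unfold zpair. pose proof (Hf (Z.of_nat k)).
    pose proof (Hf (- Z.of_nat k - 1)%Z). lra. }
  assert (Hpartial : zpair f (zslot i) <= sum_f_R0 (zpair f) (zslot i)).
  { destruct (zslot i) as [|k]; simpl; [lra|].
    pose proof (cond_pos_sum (zpair f) k Hpair). lra. }
  pose proof (sum_incr (zpair f) (zslot i) l Hl Hpair). lra.
Qed.

Lemma Zseries_local_change (f g : Z -> R) (a l s : R) (j : Z) :
  Zseries f l ->
  (forall n, n <> (j - 1)%Z -> n <> j -> n <> (j + 1)%Z -> g n = a * f n) ->
  s = a * l + (g (j - 1)%Z - a * f (j - 1)%Z) + (g j - a * f j)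
        + (g (j + 1)%Z - a * f (j + 1)%Z) ->
  Zseries g s.
Proof.
  intros Hf Hg ->.
  pose proof (Zseries_plus _ _ _ _ (Zseries_plus _ _ _ _
     (Zseries_plus _ _ _ _ (Zseries_scal a _ _ Hf)
        (Zseries_delta (j - 1) (g (j - 1)%Z - a * f (j - 1)%Z)))
        (Zseries_delta j (g j - a * f j)))
        (Zseries_delta (j + 1) (g (j + 1)%Z - a * f (j + 1)%Z))) as H.
  eapply Zseries_ext; [|exact H]. intros n. unfold zdelta.
  destruct (Z.eq_dec n (j - 1)) as [->|]; [destruct (Z.eq_dec (j - 1) j); [lia|];
    destruct (Z.eq_dec (j - 1) (j + 1)); [lia|]; ring|].
  destruct (Z.eq_dec n j) as [->|]; [destruct (Z.eq_dec j (j + 1)); [lia|]; ring|].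
  destruct (Z.eq_dec n (j + 1)) as [->|]; [ring|].
  rewrite Hg by assumption. ring.
Qed.

Lemma ZseriesC_scal (a : R) (f : Z -> Cplx) (z : Cplx) :
  ZseriesC f z -> ZseriesC (fun n => Cscal a (f n)) (Cscal a z).
Proof. intros [Hre Him]. split; apply Zseries_scal; assumption. Qed.

Lemma ZseriesC_local_change (f : Z -> R) (g : Z -> Cplx) (a s : Cplx) (l : R) (j : Z) :
  Zseries f l ->
  (forall n, n <> (j - 1)%Z -> n <> j -> n <> (j + 1)%Z -> g n = Cscal (f n) a) ->
  s = Cadd (Cadd (Cadd (Cscal l a) (Csub (g (j - 1)%Z) (Cscal (f (j - 1)%Z) a)))
                 (Csub (g j) (Cscal (f j) a)))
           (Csub (g (j + 1)%Z) (Cscal (f (j + 1)%Z) a)) ->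
  ZseriesC g s.
Proof.
  intros Hf Hg ->. split.
  - apply (Zseries_local_change f _ (Re a) l _ j Hf).
    + intros n H1 H2 H3. rewrite Hg by assumption. cplx_unfold. ring.
    + cplx_unfold. ring.
  - apply (Zseries_local_change f _ (Im a) l _ j Hf).
    + intros n H1 H2 H3. rewrite Hg by assumption. cplx_unfold. ring.
    + cplx_unfold. ring.
Qed.

Lemma Jop_scal (d x : Z -> Cplx) (s : R) (n : Z) :
  Jop d (fun m => Cscal s (x m)) n = Cscal s (Jop d x n).
Proof. unfold Jop. cplx_ring. Qed.

Lemma l2_normalize (x : Z -> Cplx) (N : R) :
  Zseries (fun n => Cnorm2 (x n)) N -> 0 < N ->
  l2_norm2_is (fun n => Cscal (/ sqrt N) (x n)) 1.
Proof.
  intros HN Hpos. unfold l2_norm2_is.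
  assert (Hs : / sqrt N * / sqrt N = / N).
  { rewrite <- Rinv_mult, sqrt_sqrt; lra. }
  replace 1 with (/ sqrt N * / sqrt N * N) by (rewrite Hs; field; lra).
  eapply Zseries_ext; [|exact (Zseries_scal _ _ _ HN)].
  intros n. cbv beta. rewrite Cnorm2_scal. reflexivity.
Qed.

Lemma numrange_of_vector (d x : Z -> Cplx) (N : R) (V : Cplx) :
  Zseries (fun n => Cnorm2 (x n)) N -> 0 < N ->
  ZseriesC (fun n => Cmul (Jop d x n) (Cconj (x n))) V ->
  NumRange d (Cscal (/ N) V).
Proof.
  intros HN Hpos HV.
  exists (fun n => Cscal (/ sqrt N) (x n)). split; [exact (l2_normalize x N HN Hpos)|].
  assert (Hs : / sqrt N * / sqrt N = / N).
  { rewrite <- Rinv_mult, sqrt_sqrt; lra. }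
  unfold inner_is. rewrite <- Hs.
  destruct (ZseriesC_scal (/ sqrt N * / sqrt N) _ _ HV) as [Hre Him].
  split; (eapply Zseries_ext; [|eassumption]); intros n; cbv beta;
    rewrite Jop_scal; cplx_unfold; ring.
Qed.

Lemma normalize_eigenvector (d : Z -> Cplx) (lam : Cplx) : is_eigenvalue d lam ->
  exists u, l2_norm2_is u 1 /\ (exists n, u n <> C0) /\
            forall n, Jop d u n = Cmul lam (u n).
Proof.
  intros [u0 [[N HN] [[n0 Hn0] Hev]]].
  assert (Hpos : 0 < N).
  { pose proof (Cnorm2_pos _ Hn0).
    pose proof (Zseries_term_le _ N n0 HN (fun n => Cnorm2_nonneg (u0 n))). lra. }
  assert (Hs : 0 < / sqrt N) by (apply Rinv_0_lt_compat, sqrt_lt_R0; lra).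
  exists (fun n => Cscal (/ sqrt N) (u0 n)). split; [|split].
  - exact (l2_normalize u0 N HN Hpos).
  - exists n0. intros E. pose proof (Cnorm2_pos _ Hn0).
    assert (Hz : Cnorm2 (Cscal (/ sqrt N) (u0 n0)) = 0) by (rewrite E; cplx_unfold; ring).
    rewrite Cnorm2_scal in Hz.
    pose proof (Rmult_lt_0_compat _ _ (Rmult_lt_0_compat _ _ Hs Hs) H). lra.
  - intros n. rewrite Jop_scal, Hev. cplx_ring.
Qed.

Lemma eigen_next (d u : Z -> Cplx) (lam : Cplx) (n : Z) :
  Jop d u n = Cmul lam (u n) ->
  u (n + 1)%Z = Csub (Cmul (Csub lam (d n)) (u n)) (u (n - 1)%Z).
Proof.
  intros H. pose proof (f_equal Re H) as H1. pose proof (f_equal Im H) as H2.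
  revert H1 H2. cplx_unfold. intros H1 H2. apply Cplx_eq; cplx_unfold; lra.
Qed.

Lemma eigen_prev (d u : Z -> Cplx) (lam : Cplx) (n : Z) :
  Jop d u n = Cmul lam (u n) ->
  u (n - 1)%Z = Csub (Cmul (Csub lam (d n)) (u n)) (u (n + 1)%Z).
Proof.
  intros H. rewrite (eigen_next d u lam n H). cplx_ring.
Qed.

Lemma eigenvector_vanishing_pair (d u : Z -> Cplx) (lam : Cplx) (m : Z) :
  (forall n, Jop d u n = Cmul lam (u n)) ->
  u m = C0 -> u (m + 1)%Z = C0 -> forall n, u n = C0.
Proof.
  intros Hev H0 H1.
  assert (Hup : forall k : nat, u (m + Z.of_nat k)%Z = C0 /\ u (m + Z.of_nat k + 1)%Z = C0).
  { induction k as [|k [IH0 IH1]].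
    - rewrite Z.add_0_r. auto.
    - replace (m + Z.of_nat (S k))%Z with (m + Z.of_nat k + 1)%Z by lia.
      split; [exact IH1|].
      rewrite (eigen_next d u lam _ (Hev _)), IH1.
      replace (m + Z.of_nat k + 1 - 1)%Z with (m + Z.of_nat k)%Z by lia.
      rewrite IH0. cplx_ring. }
  assert (Hdown : forall k : nat, u (m - Z.of_nat k)%Z = C0 /\ u (m - Z.of_nat k + 1)%Z = C0).
  { induction k as [|k [IH0 IH1]].
    - rewrite Z.sub_0_r. auto.
    - replace (m - Z.of_nat (S k))%Z with (m - Z.of_nat k - 1)%Z by lia.
      replace (m - Z.of_nat k - 1 + 1)%Z with (m - Z.of_nat k)%Z by lia.
      split; [|exact IH0].
      rewrite (eigen_prev d u lam _ (Hev _)), IH0, IH1. cplx_ring. }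
  intros n. destruct (Z_le_dec m n).
  - replace n with (m + Z.of_nat (Z.to_nat (n - m)))%Z by lia. apply Hup.
  - replace n with (m - Z.of_nat (Z.to_nat (m - n)))%Z by lia. apply Hdown.
Qed.

(* If Im lam = 0, use the pair m, m+1 where Im d <> 0;
   otherwise Im d is eventually smaller than |Im lam| at one end, and u would
   vanish on that half-line. *)
Lemma eigenvector_detuned_site (d u : Z -> Cplx) (lam : Cplx)
  (hlim : (forall eps : R, 0 < eps -> exists N : Z, forall n : Z, (N <= n)%Z -> Rabs (Im (d n)) < eps)
       \/ (forall eps : R, 0 < eps -> exists N : Z, forall n : Z, (n <= N)%Z -> Rabs (Im (d n)) < eps))
  (hm : exists m : Z, Im (d m) <> 0 /\ Im (d (m + 1)%Z) <> 0) :
  (forall n, Jop d u n = Cmul lam (u n)) -> (exists n, u n <> C0) ->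
  exists j, u j <> C0 /\ Im (d j) <> Im lam.
Proof.
  intros Hev [n0 Hn0]. apply NNPP. intros Hno. apply Hn0.
  assert (Hvanish : forall j, Im (d j) <> Im lam -> u j = C0).
  { intros j Hj. apply NNPP. intros Hu. apply Hno. exists j. auto. }
  destruct (Req_dec (Im lam) 0) as [Hreal|Hnreal].
  - destruct hm as [m [Hm0 Hm1]].
    apply (eigenvector_vanishing_pair d u lam m Hev); apply Hvanish; lra.
  - assert (Heps : 0 < Rabs (Im lam)) by (apply Rabs_pos_lt; auto).
    assert (Hfar : forall n, Rabs (Im (d n)) < Rabs (Im lam) -> u n = C0).
    { intros n Hn. apply Hvanish. intros E. rewrite E in Hn. lra. }
    destruct hlim as [Hplus|Hminus].
    + destruct (Hplus _ Heps) as [N HN].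
      apply (eigenvector_vanishing_pair d u lam N Hev); apply Hfar, HN; lia.
    + destruct (Hminus _ Heps) as [N HN].
      apply (eigenvector_vanishing_pair d u lam (N - 1) Hev); apply Hfar, HN; lia.
Qed.

Definition site_vector (j : Z) (v : Cplx) (n : Z) : Cplx :=
  if Z.eq_dec n j then v else C0.

Ltac site_cases :=
  unfold site_vector;
  repeat match goal with
         | |- context [Z.eq_dec ?a ?b] => destruct (Z.eq_dec a b); try lia
         end.

Definition test_vector (u : Z -> Cplx) (j : Z) (v : Cplx) (n : Z) : Cplx :=
  Cadd (Cmul (Csub (1, 0) (Cmul v (Cconj (u j)))) (u n)) (site_vector j v n).

(* The coefficients b = 2 i g conj p and e = (dj - lam) - 2 i g |p|^2, where
   g = Im dj - Im lam, appearing in <Jx, x>. *)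
Definition coupling (lam dj p : Cplx) : Cplx :=
  Cscal (2 * (Im dj - Im lam)) (Cmul (0, 1) (Cconj p)).

Definition drift (lam dj p : Cplx) : Cplx :=
  Csub (Csub dj lam) (Cscal (2 * (Im dj - Im lam) * Cnorm2 p) (0, 1)).

Lemma Jop_test_vector (d u : Z -> Cplx) (lam : Cplx) (j : Z) (v : Cplx) (n : Z) :
  (forall n, Jop d u n = Cmul lam (u n)) ->
  Jop d (test_vector u j v) n =
  Cadd (Cmul (Csub (1, 0) (Cmul v (Cconj (u j)))) (Cmul lam (u n)))
       (Jop d (site_vector j v) n).
Proof.
  intros Hev. rewrite <- Hev. unfold test_vector. cplx_ring.
Qed.

Lemma test_vector_norm (u : Z -> Cplx) (j : Z) (v : Cplx) :
  l2_norm2_is u 1 ->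
  Zseries (fun n => Cnorm2 (test_vector u j v n)) (1 + (1 - Cnorm2 (u j)) * Cnorm2 v).
Proof.
  intros Hu.
  apply (Zseries_local_change _ _ (Cnorm2 (Csub (1, 0) (Cmul v (Cconj (u j))))) 1 _ j Hu).
  - intros n H1 H2 H3. unfold test_vector. site_cases. cplx_unfold. ring.
  - unfold test_vector. site_cases. cplx_unfold. ring.
Qed.

(* <Jx, x> = ||x||^2 lam + v b + |v|^2 e; only the sites j-1, j, j+1 differ
   from the eigenvector contribution, and u(j+1) is eliminated through the
   eigenvalue equation at j. *)
Lemma test_vector_form (d u : Z -> Cplx) (lam : Cplx) (j : Z) (v : Cplx) :
  l2_norm2_is u 1 -> (forall n, Jop d u n = Cmul lam (u n)) ->
  ZseriesC (fun n => Cmul (Jop d (test_vector u j v) n) (Cconj (test_vector u j v n)))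
    (Cadd (Cscal (1 + (1 - Cnorm2 (u j)) * Cnorm2 v) lam)
          (Cadd (Cmul v (coupling lam (d j) (u j)))
                (Cscal (Cnorm2 v) (drift lam (d j) (u j))))).
Proof.
  intros Hu Hev.
  apply (ZseriesC_local_change _ _
           (Cscal (Cnorm2 (Csub (1, 0) (Cmul v (Cconj (u j))))) lam) _ 1 j Hu).
  - intros n H1 H2 H3. rewrite (Jop_test_vector d u lam j v n Hev).
    unfold Jop, test_vector. site_cases. cplx_ring.
  - rewrite !(Jop_test_vector d u lam j v _ Hev).
    unfold Jop, test_vector. site_cases.
    rewrite (eigen_next d u lam j (Hev j)).
    unfold coupling, drift. cplx_ring.
Qed.
Lemma quadratic_root (A K R0 B : R) :
  0 <= A -> 0 <= K -> 0 < B -> R0 ^ 2 <= A * K -> 16 * (A * K) <= B ^ 2 ->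
  exists r, 0 <= r /\ K * r ^ 2 - (B - 2 * R0) * r + A = 0.
Proof.
  intros HA HK HB HR0 HAK.
  set (P := B - 2 * R0).
  assert (HP : B / 2 <= P) by (unfold P; nra).
  assert (Hdisc : 0 <= P ^ 2 - 4 * K * A) by nra.
  set (S := sqrt (P ^ 2 - 4 * K * A)).
  assert (HS : 0 <= S) by apply sqrt_pos.
  assert (HS2 : S * S = P ^ 2 - 4 * K * A) by (apply sqrt_sqrt; lra).
  exists (2 * A / (P + S)). split.
  - unfold Rdiv. apply Rmult_le_pos; [lra|]. left. apply Rinv_0_lt_compat. lra.
  - field_simplify; [|lra]. replace (S ^ 2) with (S * S) by ring. rewrite HS2.
    unfold Rdiv. apply Rmult_eq_0_compat_r. ring.
Qed.

(* Writing r = |v|^2 and v = (h + r (c h - e)) / b, the constraint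
   |v|^2 = r is the quadratic equation of [quadratic_root]. *)
Lemma local_surjectivity (b e : Cplx) (c : R) : b <> C0 -> 0 <= c ->
  exists delta, 0 < delta /\ forall h, Cnorm2 h < delta ->
  exists v, Cadd (Cmul v b) (Cscal (Cnorm2 v) e) = Cscal (1 + c * Cnorm2 v) h.
Proof.
  intros Hb Hc. set (B := Cnorm2 b). set (M := 32 * (c ^ 2 + Cnorm2 e) + 1).
  assert (HB : 0 < B) by exact (Cnorm2_pos b Hb).
  assert (HM : 1 <= M) by (unfold M; pose proof (Cnorm2_nonneg e); nra).
  exists (Rmin 1 (B ^ 2 / M)). split.
  { apply Rmin_glb_lt; [lra|]. apply Rdiv_lt_0_compat; [nra|lra]. }
  intros h Hh.
  assert (Hh1 : Cnorm2 h <= 1) by (pose proof (Rmin_l 1 (B ^ 2 / M)); lra).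
  assert (HhM : Cnorm2 h * M <= B ^ 2).
  { pose proof (Rmin_r 1 (B ^ 2 / M)).
    apply (Rmult_le_compat_r M) in H; [|lra].
    unfold Rdiv in H. rewrite Rmult_assoc, Rinv_l in H by lra. nra. }
  set (k := Csub (Cscal c h) e).
  assert (Hk : Cnorm2 k <= 2 * (c ^ 2 + Cnorm2 e)).
  { assert (Hsplit : Cnorm2 k <= 2 * (c ^ 2 * Cnorm2 h + Cnorm2 e)).
    { unfold k. cplx_unfold.
      pose proof (pow2_ge_0 (c * fst h + fst e)). pose proof (pow2_ge_0 (c * snd h + snd e)).
      nra. }
    pose proof (pow2_ge_0 c). nra. }
  set (R0 := Re h * Re k + Im h * Im k).
  assert (HCS : R0 ^ 2 <= Cnorm2 h * Cnorm2 k).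
  { pose proof (pow2_ge_0 (Re h * Im k - Im h * Re k)). unfold R0, Cnorm2. nra. }
  destruct (quadratic_root (Cnorm2 h) (Cnorm2 k) R0 B) as [r [Hr Hroot]];
    try apply Cnorm2_nonneg; try assumption.
  { pose proof (Cnorm2_nonneg h).
    assert (16 * (Cnorm2 h * Cnorm2 k) <= Cnorm2 h * M) by (unfold M; nra). lra. }
  set (w := Cadd h (Cscal r k)).
  exists (Cscal (/ B) (Cmul w (Cconj b))).
  assert (Hv : Cnorm2 (Cscal (/ B) (Cmul w (Cconj b))) = r).
  { assert (Hw : Cnorm2 w = r * B).
    { unfold w. replace (r * B) with (Cnorm2 h + 2 * r * R0 + r ^ 2 * Cnorm2 k) by lra.
      unfold R0. cplx_unfold. ring. }
    assert (Hconj : Cnorm2 (Cconj b) = B) by (unfold B; cplx_unfold; ring).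
    rewrite Cnorm2_scal, Cnorm2_mul, Hw, Hconj. field. lra. }
  assert (Hvb : Cmul (Cscal (/ B) (Cmul w (Cconj b))) b = w).
  { assert (HB' : fst b * fst b + snd b * snd b <> 0)
      by (unfold B, Cnorm2, Re, Im in HB; nra).
    unfold B; apply Cplx_eq; cplx_unfold; field; exact HB'. }
  rewrite Hv, Hvb. unfold w, k. cplx_ring.
Qed.

Lemma numrange_contains_perturbation (d u : Z -> Cplx) (lam : Cplx) (j : Z) (v : Cplx) :
  l2_norm2_is u 1 -> (forall n, Jop d u n = Cmul lam (u n)) ->
  NumRange d (Cadd lam (Cscal (/ (1 + (1 - Cnorm2 (u j)) * Cnorm2 v))
                 (Cadd (Cmul v (coupling lam (d j) (u j)))
                       (Cscal (Cnorm2 v) (drift lam (d j) (u j)))))).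
Proof.
  intros Hu Hev.
  assert (Hc : 0 <= 1 - Cnorm2 (u j))
    by (pose proof (Zseries_term_le _ 1 j Hu (fun n => Cnorm2_nonneg (u n))); lra).
  set (N := 1 + (1 - Cnorm2 (u j)) * Cnorm2 v).
  assert (HN : 0 < N) by (unfold N; pose proof (Cnorm2_nonneg v); nra).
  set (W := Cadd (Cmul v (coupling lam (d j) (u j))) (Cscal (Cnorm2 v) (drift lam (d j) (u j)))).
  replace (Cadd lam (Cscal (/ N) W)) with (Cscal (/ N) (Cadd (Cscal N lam) W))
    by (apply Cplx_eq; unfold Cadd, Cscal, Re, Im; simpl; field; lra).
  apply numrange_of_vector with (x := test_vector u j v).
  - exact (test_vector_norm u j v Hu).
  - exact HN.
  - exact (test_vector_form d u lam j v Hu Hev).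
Qed.

Lemma eigenvalue_interior (d u : Z -> Cplx) (lam : Cplx) (j : Z) :
  l2_norm2_is u 1 -> (forall n, Jop d u n = Cmul lam (u n)) ->
  u j <> C0 -> Im (d j) <> Im lam -> in_interior (NumRange d) lam.
Proof.
  intros Hu Hev Hp Hgap.
  set (b := coupling lam (d j) (u j)). set (e := drift lam (d j) (u j)).
  set (c := 1 - Cnorm2 (u j)).
  assert (Hc : 0 <= c)
    by (pose proof (Zseries_term_le _ 1 j Hu (fun n => Cnorm2_nonneg (u n))); unfold c; lra).
  assert (Hb : b <> C0).
  { intros E.
    assert (Hnorm : Cnorm2 b = (2 * (Im (d j) - Im lam)) ^ 2 * Cnorm2 (u j))
      by (unfold b, coupling; cplx_unfold; ring).
    assert (H0 : Cnorm2 C0 = 0) by (cplx_unfold; ring).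
    rewrite E, H0 in Hnorm.
    pose proof (Cnorm2_pos _ Hp).
    assert (Hg : 0 < (2 * (Im (d j) - Im lam)) ^ 2).
    { assert (Hg0 : 2 * (Im (d j) - Im lam) <> 0) by (intros Hz; apply Hgap; lra).
      pose proof (Rsqr_pos_lt _ Hg0). unfold Rsqr in *. nra. }
    nra. }
  destruct (local_surjectivity b e c Hb Hc) as [delta [Hdelta Hsurj]].
  exists (sqrt delta). split; [apply sqrt_lt_R0; exact Hdelta|].
  intros w Hw.
  destruct (Hsurj (Csub w lam) (Cnorm2_lt_of_Cmod_lt _ _ Hw)) as [v Hv].
  pose proof (numrange_contains_perturbation d u lam j v Hu Hev) as Hnum.
  fold b e c in Hnum. rewrite Hv in Hnum.
  replace w with (Cadd lam (Cscal (/ (1 + c * Cnorm2 v)) (Cscal (1 + c * Cnorm2 v) (Csub w lam)))).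
  - exact Hnum.
  - pose proof (Cnorm2_nonneg v).
    apply Cplx_eq; unfold Cadd, Csub, Cscal, Re, Im; simpl; field; nra.
Qed.

Theorem mainTheorem9 (d : Z -> Cplx)
  (hbdd : exists M : R, forall n : Z, Cmod (d n) <= M)
  (hlim : (forall eps : R, 0 < eps -> exists N : Z, forall n : Z, (N <= n)%Z -> Rabs (Im (d n)) < eps)
       \/ (forall eps : R, 0 < eps -> exists N : Z, forall n : Z, (n <= N)%Z -> Rabs (Im (d n)) < eps))
  (hm : exists m : Z, Im (d m) <> 0 /\ Im (d (m + 1)%Z) <> 0) :
  ~ (exists lam : Cplx, is_boundary_eigenvalue d lam).
Proof.
  intros [lam [Heig [_ Hnot_interior]]].
  destruct (normalize_eigenvector d lam Heig) as [u [Hu [Hnz Hev]]].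
  destruct (eigenvector_detuned_site d u lam hlim hm Hev Hnz) as [j [Hj Hgap]].
  exact (Hnot_interior (eigenvalue_interior d u lam j Hu Hev Hj Hgap)).
Qed.
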